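(* Let $X$ be an infinite dimensional separable Banach space and $T:X\to X$ a continuous linear operator. The following are equivalent: (1) for every $\delta>0$, $(X,T)$ is transitively sensitive with sensitive constant $\delta$; (2) there exists $\delta_0>0$ such that $(X,T)$ is transitively sensitive with sensitive constant $\delta_0$; (3) there exists $\delta_0>0$ such that $S_T(W_0,\delta_0)\cap N_T(U,V)\neq\varnothing$ for all nonempty open $U,V\subset X$ and every neighbourhood $W_0$ of $0$.
   Context: $N_T(U,V)=\{n\in\mathbb{Z}_+:U\cap T^{-n}V\neq\varnothing\}$ and $S_T(W,\delta)=\{n\in\mathbb{Z}_+:\exists x_1,x_2\in W,\ \|T^nx_1-T^nx_2\|>\delta\}$. $(X,T)$ is transitively sensitive with sensitive constant $\delta$ if $S_T(W,\delta)\cap N_T(U,V)\neq\varnothing$ for all nonempty open $U,V,W\subset X$. *)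

From HB Require Import structures.
From mathcomp Require Import all_boot all_order all_algebra.
From mathcomp Require Import all_classical all_reals all_analysis.
Set Implicit Arguments. Unset Strict Implicit. Unset Printing Implicit Defensive.
Import Order.TTheory GRing.Theory Num.Theory.
Import numFieldNormedType.Exports.
Local Open Scope classical_set_scope.
Local Open Scope ring_scope.

Section Defs.
Variables (R : realType) (X : normedModType R).

Definition N_T (T : X -> X) (U V : set X) : set nat :=
  [set n | U `&` (iter n T) @^-1` V !=set0].

Definition S_T (T : X -> X) (W : set X) (delta : R) : set nat :=
  [set n | exists x1 x2, W x1 /\ W x2 /\ delta < `|iter n T x1 - iter n T x2|].

Definition transitively_sensitive (T : X -> X) (delta : R) : Prop :=
  forall U V W : set X, open U -> U !=set0 -> open V -> V !=set0 ->
    open W -> W !=set0 -> S_T T W delta `&` N_T T U V !=set0.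

Definition separable_space : Prop :=
  exists D : set X, countable D /\ dense D.

Definition infinite_dimensional : Prop :=
  forall (n : nat) (v : 'I_n -> X), exists x : X,
    forall c : 'I_n -> R, x <> \sum_(i < n) c i *: v i.
End Defs.

From HB Require Import structures.
From mathcomp Require Import all_boot all_order all_algebra.
From mathcomp Require Import all_classical all_reals all_analysis.
Import Order.TTheory GRing.Theory Num.Theory.
Import numFieldNormedType.Exports.
Local Open Scope classical_set_scope.
Local Open Scope ring_scope.

(* Sensitivity of a linear map is invariant under
   the affine maps y |-> w + c y: they send the difference of two orbits to c
   times a difference of orbits, so a ball around 0 witnessing sensitivity with
   constant delta0 becomes a ball around any w witnessing constant c * delta0.
   Hence the sensitive constant can be rescaled at will, and neighbourhoods of
   0 are as good as arbitrary open sets. *)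

Section LinearSensitivity.
Context {R : realType} {X : normedModType R} (T : {linear X -> X}).

Definition sensitive_at_zero (delta : R) : Prop :=
  forall U V W0 : set X, open U -> U !=set0 -> open V -> V !=set0 ->
    nbhs (0 : X) W0 -> S_T T W0 delta `&` N_T T U V !=set0.

Lemma iter_linearD n (x y : X) : iter n T (x + y) = iter n T x + iter n T y.
Proof. by elim: n => //= n ->; rewrite linearD. Qed.

Lemma iter_linearZ n (c : R) (x : X) : iter n T (c *: x) = c *: iter n T x.
Proof. by elim: n => //= n ->; rewrite linearZ. Qed.

Lemma S_T_sub {W W' : set X} {delta : R} :
  W `<=` W' -> S_T T W delta `<=` S_T T W' delta.
Proof. by move=> sWW' n [x1 [x2 [W1 [W2 lt12]]]]; exists x1, x2; split; [|split]; auto. Qed.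

Lemma S_T_affine {W : set X} (w : X) {c delta : R} : 0 < c ->
  S_T T W delta `<=` S_T T [set w + c *: y | y in W] (c * delta).
Proof.
move=> c_gt0 n [y1 [y2 [W1 [W2 lt12]]]].
exists (w + c *: y1), (w + c *: y2); split; [by exists y1|split; first by exists y2].
have -> : iter n T (w + c *: y1) - iter n T (w + c *: y2) =
          c *: (iter n T y1 - iter n T y2).
  by rewrite !iter_linearD !iter_linearZ opprD addrACA subrr add0r scalerBr.
by rewrite normrZ gtr0_norm // ltr_pM2l.
Qed.

Lemma affine_ball_sub (w : X) (r : R) {c : R} : 0 < c ->
  [set w + c *: y | y in ball (0 : X) (r / c)] `<=` ball w r.
Proof.
move=> c_gt0 _ [y y_small <-]; move: y_small.
rewrite -!ball_normE /= sub0r normrN opprD addrA subrr sub0r normrN normrZ.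
by rewrite gtr0_norm // ltr_pdivlMr // mulrC.
Qed.

Lemma transitively_sensitive_at_zero {delta : R} :
  transitively_sensitive T delta -> sensitive_at_zero delta.
Proof.
move=> sensT U V W0 oU U0 oV V0 /nbhs_ballP[e e_gt0 ballW0].
have [n [Sn Nn]] :=
  sensT U V _ oU U0 oV V0 (ball_open 0 e) (ex_intro _ 0 (ballxx _ e_gt0)).
by exists n; split => //; exact: S_T_sub ballW0 _ Sn.
Qed.

Lemma sensitive_at_zero_rescale {delta0 delta : R} : 0 < delta0 -> 0 < delta ->
  sensitive_at_zero delta0 -> transitively_sensitive T delta.
Proof.
move=> delta0_gt0 delta_gt0 sens0 U V W oU U0 oV V0 oW [w Ww].
have /nbhs_ballP[r r_gt0 ballW] : nbhs w W by move: oW; rewrite openE; exact.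
pose c := delta / delta0.
have c_gt0 : 0 < c by rewrite divr_gt0.
have [n [Sn Nn]] := sens0 U V _ oU U0 oV V0 (nbhsx_ballx 0 _ (divr_gt0 r_gt0 c_gt0)).
exists n; split => //.
rewrite -[delta](divfK (lt0r_neq0 delta0_gt0)) -/c.
exact: S_T_sub (subset_trans (affine_ball_sub w r c_gt0) ballW) _ (S_T_affine w c_gt0 _ Sn).
Qed.

End LinearSensitivity.

Theorem proposition7p3 (R : realType) (X : completeNormedModType R)
    (T : {linear X -> X}) :
  infinite_dimensional X -> separable_space X -> continuous T ->
  [/\ ((forall delta : R, 0 < delta -> transitively_sensitive T delta) <->
       (exists delta0 : R, 0 < delta0 /\ transitively_sensitive T delta0)),
      ((exists delta0 : R, 0 < delta0 /\ transitively_sensitive T delta0) <->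
       (exists delta0 : R, 0 < delta0 /\
          forall U V W0 : set X, open U -> U !=set0 -> open V -> V !=set0 ->
            nbhs (0 : X) W0 -> S_T T W0 delta0 `&` N_T T U V !=set0)) &
      ((forall delta : R, 0 < delta -> transitively_sensitive T delta) <->
       (exists delta0 : R, 0 < delta0 /\
          forall U V W0 : set X, open U -> U !=set0 -> open V -> V !=set0 ->
            nbhs (0 : X) W0 -> S_T T W0 delta0 `&` N_T T U V !=set0))].
Proof.
move=> _ _ _; split; split.
- by move=> ts_all; exists 1; split; [exact: ltr01 | exact (ts_all 1 ltr01)].
- move=> [d0 [d0_gt0 ts0]] d d_gt0.
  exact (sensitive_at_zero_rescale T d0_gt0 d_gt0 (transitively_sensitive_at_zero T ts0)).
- move=> [d0 [d0_gt0 ts0]]; exists d0.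
  split; [exact: d0_gt0 | exact (transitively_sensitive_at_zero T ts0)].
- move=> [d0 [d0_gt0 s0]]; exists d0.
  split; [exact: d0_gt0 | exact (sensitive_at_zero_rescale T d0_gt0 d0_gt0 s0)].
- move=> ts_all; exists 1.
  split; [exact: ltr01 | exact (transitively_sensitive_at_zero T (ts_all 1 ltr01))].
- move=> [d0 [d0_gt0 s0]] d d_gt0.
  exact (sensitive_at_zero_rescale T d0_gt0 d_gt0 s0).
Qed.
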